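(* Let $\mathsf{L}$ be a logic, $\mathcal{C}$ a class of $\mathsf{L}$-models, and $\Theta$ an $(\mathsf{L},\mathcal{C})$-pair (with, for each $M\in\mathcal{C}$, fixed functions $\mathsf{sem}^o_M$ witnessing the inductive property and a fixed set $\mathsf{SAT}_M$ as described in the context). Then the semantic enumeration procedure described in the context, run on a $\mathcal{C}$-sample $\mathcal{S}=(\mathcal{P},\mathcal{N})$, accepts if and only if $\mathcal{S}$ is $\mathsf{L}$-separable; that is, it decides the passive learning problem $\mathsf{PvLn}(\mathsf{L},\mathcal{C})$.
   Context: A logic $\mathsf{L}$ is given by a syntax $(\mathcal{T},\mathcal{T}_f,\mathsf{Op},(\tau_o)_{o\in\mathsf{Op}},T)$: $\mathcal{T}$ a non-empty finite set of types, $\emptyset\neq\mathcal{T}_f\subseteq\mathcal{T}$ final types, $\mathsf{Op}=\mathsf{Op}_0\uplus\mathsf{Op}_1\uplus\mathsf{Op}_2$ operators of arity 0,1,2 with $\mathsf{Op}_0\ne\emptyset$, each $o$ with a type $\tau_o\in\mathcal{T}$ and sets $T(o,i)\subseteq\mathcal{T}$ of allowed argument types. Formulas of type $\tau$, $\mathsf{Fm}_{\mathsf{L}}(\tau)$, are built inductively: $o\in\mathsf{Op}_0$ has type $\tau_o$; $o(\varphi_1)$ (resp. $o(\varphi_1,\varphi_2)$) has type $\tau_o$ when each $\varphi_i$ has a type in $T(o,i)$. $\mathsf{Fm}_{\mathsf{L}}(X)=\bigcup_{\tau\in X}\mathsf{Fm}_{\mathsf{L}}(\tau)$; final formulas are $\mathsf{Fm}^f_{\mathsf{L}}=\mathsf{Fm}_{\mathsf{L}}(\mathcal{T}_f)$.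 An $\mathsf{L}$-model $M$ has a satisfaction relation $M\models\varphi$ for final formulas; a class of $\mathsf{L}$-models is a set of them. A $\mathcal{C}$-sample is a pair $(\mathcal{P},\mathcal{N})$ of finite subsets of $\mathcal{C}$; it is $\mathsf{L}$-separable if some final formula $\varphi$ has $M\models\varphi$ for all $M\in\mathcal{P}$ and $M\not\models\varphi$ for all $M\in\mathcal{N}$. $\mathsf{PvLn}(\mathsf{L},\mathcal{C})$: given a $\mathcal{C}$-sample, decide whether it is $\mathsf{L}$-separable. An $(\mathsf{L},M)$-pair $(\mathsf{SEM}_M,\mathsf{sem}_M)$: a finite set $\mathsf{SEM}_M=\bigcup_\tau\mathsf{SEM}_M(\tau)$ (pairwise disjoint parts) and $\mathsf{sem}_M:\mathsf{Fm}_{\mathsf{L}}\to\mathsf{SEM}_M$ mapping type-$\tau$ formulas into $\mathsf{SEM}_M(\tau)$; $\mathsf{SEM}_M(X)=\bigcup_{\tau\in X}\mathsf{SEM}_M(\tau)$. It captures the $\mathsf{L}$-semantics if for all $\tau$ and all final $\varphi,\varphi'$ of type $\tau$ with $\mathsf{sem}_M(\varphi)=\mathsf{sem}_M(\varphi')$ we have $M\models\varphi$ iff $M\models\varphi'$; in that case fix a subset $\mathsf{SAT}_M\subseteq\mathsf{SEM}_M$ such that for every final $\varphi$, $M\models\varphi$ iff $\mathsf{sem}_M(\varphi)\in\mathsf{SAT}_M$. It satisfies the inductive property if for each $o\in\mathsf{Op}_1$ there is $\mathsf{sem}^o_M:\mathsf{SEM}_M(T(o,1))\to\mathsf{SEM}_M(\tau_o)$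 with $\mathsf{sem}_M(o(\varphi_1))=\mathsf{sem}^o_M(\mathsf{sem}_M(\varphi_1))$ for all $\varphi_1\in\mathsf{Fm}_{\mathsf{L}}(T(o,1))$, and for each $o\in\mathsf{Op}_2$ there is $\mathsf{sem}^o_M:\mathsf{SEM}_M(T(o,1))\times\mathsf{SEM}_M(T(o,2))\to\mathsf{SEM}_M(\tau_o)$ with $\mathsf{sem}_M(o(\varphi_1,\varphi_2))=\mathsf{sem}^o_M(\mathsf{sem}_M(\varphi_1),\mathsf{sem}_M(\varphi_2))$; fix such functions. An $(\mathsf{L},\mathcal{C})$-pair is a family $(\Theta_M)_{M\in\mathcal{C}}$ of $(\mathsf{L},M)$-pairs each capturing the $\mathsf{L}$-semantics and satisfying the inductive property. The procedure on input $\mathcal{S}=(\mathcal{P},\mathcal{N})$ (with $\mathcal{S}$ identified with $\mathcal{P}\cup\mathcal{N}$): start with the set $R$ of pairs $((\mathsf{sem}_M(o))_{M\in\mathcal{S}},\tau_o)$ for $o\in\mathsf{Op}_0$; repeatedly, until $R$ no longer changes, add for every $o\in\mathsf{Op}_1$ and every $(X,\tau_1)\in R$ with $\tau_1\in T(o,1)$ the pair $((\mathsf{sem}^o_M(X[M]))_{M\in\mathcal{S}},\tau_o)$, and for every $o\in\mathsf{Op}_2$ and all $(X_1,\tau_1),(X_2,\tau_2)\in R$ with $\tau_i\in T(o,i)$ the pair $((\mathsf{sem}^o_M(X_1[M],X_2[M]))_{M\in\mathcal{S}},\tau_o)$. Finally, accept iff there is $(X,\tau)\in R$ with $\tau\in\mathcal{T}_f$,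 $X[M]\in\mathsf{SAT}_M$ for all $M\in\mathcal{P}$ and $X[M]\in\mathsf{SEM}_M\setminus\mathsf{SAT}_M$ for all $M\in\mathcal{N}$; otherwise reject. *)

From mathcomp Require Import all_boot.
From Stdlib Require List.

Set Implicit Arguments.
Unset Strict Implicit.
Unset Printing Implicit Defensive.

(* Op = Op0 (+) Op1 (+) Op2 is given by three separate carrier types.  *)
Record logic := Logic {
  ty : finType;
  final : {set ty};
  final_nonempty : final != set0;
  Op0 : Type; Op1 : Type; Op2 : Type;
  Op0_nonempty : inhabited Op0;
  tau0 : Op0 -> ty; tau1 : Op1 -> ty; tau2 : Op2 -> ty;
  T1 : Op1 -> {set ty};
  T21 : Op2 -> {set ty};
  T22 : Op2 -> {set ty}
}.

Inductive form (L : logic) : Type :=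
| FOp0 : Op0 L -> form L
| FOp1 : Op1 L -> form L -> form L
| FOp2 : Op2 L -> form L -> form L -> form L.

Definition fty (L : logic) (f : form L) : ty L :=
  match f with
  | FOp0 o => tau0 o
  | FOp1 o _ => tau1 o
  | FOp2 o _ _ => tau2 o
  end.

Fixpoint wf (L : logic) (f : form L) : bool :=
  match f with
  | FOp0 _ => true
  | FOp1 o g => wf g && (fty g \in T1 o)
  | FOp2 o g h => [&& wf g, fty g \in T21 o, wf h & fty h \in T22 o]
  end.

Definition is_fm (L : logic) (f : form L) (t : ty L) : Prop :=
  wf f /\ fty f = t.

Definition is_final (L : logic) (f : form L) : Prop :=
  wf f /\ fty f \in final L.

(* SEM_M is a finite type; its partition into SEM_M(tau) is given by   *)
(* semty : SEM_M -> T  (SEM_M(tau) = [set x | semty x == tau]).        *)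
(* sem^o_M are total functions, constrained on their domain            *)
(* SEM_M(T(o,i)) only.                                                 *)
Record LMpair (L : logic) := LMPair {
  SEM : finType;
  semty : SEM -> ty L;
  sem : form L -> SEM;
  SAT : {set SEM};
  sem1 : Op1 L -> SEM -> SEM;
  sem2 : Op2 L -> SEM -> SEM -> SEM
}.
Arguments SEM {L} l.
Arguments semty {L} l _.
Arguments sem {L} l _.
Arguments SAT {L} l.
Arguments sem1 {L} l _ _.
Arguments sem2 {L} l _ _ _.

Definition LMpair_ok (L : logic) (Model : Type)
  (sat : Model -> form L -> Prop) (M : Model) (p : LMpair L) : Prop :=
  (forall f t, is_fm f t -> semty p (sem p f) = t) /\
  (forall f f' t, is_final f -> is_final f' -> is_fm f t -> is_fm f' t ->
      sem p f = sem p f' -> (sat M f <-> sat M f')) /\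
  (forall f, is_final f -> (sat M f <-> sem p f \in SAT p)) /\
  (forall o x, semty p x \in T1 o -> semty p (sem1 p o x) = tau1 o) /\
  (forall o f, wf f -> fty f \in T1 o ->
      sem p (FOp1 o f) = sem1 p o (sem p f)) /\
  (forall o x y, semty p x \in T21 o -> semty p y \in T22 o ->
      semty p (sem2 p o x y) = tau2 o) /\
  (forall o f g, wf f -> fty f \in T21 o -> wf g -> fty g \in T22 o ->
      sem p (FOp2 o f g) = sem2 p o (sem p f) (sem p g)).

Definition LCpair (L : logic) (Model : Type) (sat : Model -> form L -> Prop)
  (C : Model -> Prop) (Theta : Model -> LMpair L) : Prop :=
  forall M, C M -> LMpair_ok sat M (Theta M).

Definition sample (Model : Type) (C : Model -> Prop) (P N : seq Model) : Prop :=
  (forall M, List.In M P -> C M) /\ (forall M, List.In M N -> C M).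

Definition separable (L : logic) (Model : Type) (sat : Model -> form L -> Prop)
  (P N : seq Model) : Prop :=
  exists f, is_final f /\ (forall M, List.In M P -> sat M f) /\
                          (forall M, List.In M N -> ~ sat M f).

(* The sample S = P u N is enumerated as the list s := P ++ N; a tuple *)
(* X assigns to each position i of s an element of SEM_{s_i}.          *)
(* InR is the final value of R: the least set containing the initial   *)
(* pairs and closed under the two saturation rules (= the limit of the *)
(* "repeat until R no longer changes" loop).                           *)
Definition smodel (Model : Type) (s : seq Model) (i : 'I_(size s)) : Model :=
  tnth (in_tuple s) i.

Definition semtuple (L : logic) (Model : Type) (Theta : Model -> LMpair L)
  (s : seq Model) : Type :=
  forall i : 'I_(size s), SEM (Theta (smodel i)).

Inductive InR (L : logic) (Model : Type) (Theta : Model -> LMpair L)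
  (s : seq Model) : semtuple Theta s -> ty L -> Prop :=
| InR0 (o : Op0 L) :
    InR (fun i => sem (Theta (smodel i)) (FOp0 o)) (tau0 o)
| InR1 (o : Op1 L) (X : semtuple Theta s) (t : ty L) :
    InR X t -> t \in T1 o ->
    InR (fun i => sem1 (Theta (smodel i)) o (X i)) (tau1 o)
| InR2 (o : Op2 L) (X1 X2 : semtuple Theta s) (t1 t2 : ty L) :
    InR X1 t1 -> t1 \in T21 o -> InR X2 t2 -> t2 \in T22 o ->
    InR (fun i => sem2 (Theta (smodel i)) o (X1 i) (X2 i)) (tau2 o).

(* acceptance: positions i < size P are the models of P, the others of N *)
Definition accepts (L : logic) (Model : Type) (Theta : Model -> LMpair L)
  (P N : seq Model) : Prop :=
  exists (X : semtuple Theta (P ++ N)) (t : ty L),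
    InR X t /\ t \in final L /\
    (forall i : 'I_(size (P ++ N)),
        if (i < size P)%N then X i \in SAT (Theta (smodel i))
        else X i \notin SAT (Theta (smodel i))).

(* A tuple in R is the semantic profile of some formula on the sample, and the
   profile of every well-formed formula lands in R: the inductive property lets
   each saturation step follow the corresponding formula constructor, and
   conversely.  Since SAT_M decides satisfaction of final formulas, an
   accepting tuple of final type is exactly the profile of a separating
   formula. *)
From mathcomp Require Import all_boot.
From Stdlib Require List.

Set Implicit Arguments.
Unset Strict Implicit.
Unset Printing Implicit Defensive.

Lemma In_nthP (T : Type) (x0 x : T) (s : seq T) :
  List.In x s <-> exists2 j, j < size s & nth x0 s j = x.
Proof.
elim: s => [|y s IHs] /=; first by split=> [|[]].
split=> [[-> | /IHs[j lt_js <-]] | [[|j] /= lt_js jx]].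
- by exists 0.
- by exists j.+1.
- by left.
- by right; apply/IHs; exists j.
Qed.

Lemma smodelE (Model : Type) (s : seq Model) (x0 : Model) (i : 'I_(size s)) :
  smodel i = nth x0 s i.
Proof. exact: tnth_nth. Qed.

Section PositionsInSample.

Variables (Model : Type) (P N : seq Model).

Lemma smodel_cat_In (i : 'I_(size (P ++ N))) :
  if i < size P then List.In (smodel i) P else List.In (smodel i) N.
Proof.
pose x0 := smodel i; rewrite (smodelE x0) nth_cat.
case: ltnP => [lt_iP | le_Pi]; apply/(In_nthP x0); first by exists i.
by exists (i - size P); rewrite // ltn_subLR // -size_cat.
Qed.

Lemma In_smodel_catl (M : Model) : List.In M P ->
  exists2 i : 'I_(size (P ++ N)), i < size P & smodel i = M.
Proof.
case/(In_nthP M) => j lt_jP <-.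
have lt_jPN : j < size (P ++ N) by rewrite size_cat ltn_addr.
by exists (Ordinal lt_jPN); rewrite //= (smodelE M) nth_cat lt_jP.
Qed.

Lemma In_smodel_catr (M : Model) : List.In M N ->
  exists2 i : 'I_(size (P ++ N)), ~~ (i < size P) & smodel i = M.
Proof.
case/(In_nthP M) => j lt_jN <-.
have lt_jPN : size P + j < size (P ++ N) by rewrite size_cat ltn_add2l.
exists (Ordinal lt_jPN); first by rewrite /= -leqNgt leq_addr.
by rewrite (smodelE M) nth_cat /= ltnNge leq_addr addKn.
Qed.

Lemma sample_smodel (C : Model -> Prop) :
  sample C P N -> forall i : 'I_(size (P ++ N)), C (smodel i).
Proof.
case=> CP CN i; have := smodel_cat_In i.
by case: ifP => _; [apply: CP | apply: CN].
Qed.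

End PositionsInSample.

Section SemanticEnumeration.

Variables (L : logic) (Model : Type) (sat : Model -> form L -> Prop).
Variables (C : Model -> Prop) (Theta : Model -> LMpair L).
Hypothesis HTheta : LCpair sat C Theta.

Lemma sem_FOp1 M o f : C M -> wf f -> fty f \in T1 o ->
  sem (Theta M) (FOp1 o f) = sem1 (Theta M) o (sem (Theta M) f).
Proof. by move/HTheta => [_ [_ [_ [_ [semE _]]]]]; apply: semE. Qed.

Lemma sem_FOp2 M o f g : C M -> wf f -> fty f \in T21 o ->
    wf g -> fty g \in T22 o ->
  sem (Theta M) (FOp2 o f g) =
    sem2 (Theta M) o (sem (Theta M) f) (sem (Theta M) g).
Proof. by move/HTheta => [_ [_ [_ [_ [_ [_ semE]]]]]]; apply: semE. Qed.

Lemma satE M f : C M -> is_final f ->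
  sat M f <-> sem (Theta M) f \in SAT (Theta M).
Proof. by move/HTheta => [_ [_ [satE _]]]; apply: satE. Qed.

Lemma accepting_profile_separates (P N : seq Model) f :
  sample C P N -> is_final f ->
  (forall i : 'I_(size (P ++ N)),
     if i < size P then sem (Theta (smodel i)) f \in SAT (Theta (smodel i))
     else sem (Theta (smodel i)) f \notin SAT (Theta (smodel i))) <->
  (forall M, List.In M P -> sat M f) /\ (forall M, List.In M N -> ~ sat M f).
Proof.
move=> [CP CN] ff; split=> [acc | [satP unsatN] i].
- split=> M.
  + move=> PM; have [i lt_iP iM] := In_smodel_catl N PM.
    by have := acc i; rewrite lt_iP iM => /(satE (CP M PM) ff).
  + move=> NM; have [i /negbTE ge_iP iM] := In_smodel_catr P NM.
    have := acc i; rewrite ge_iP iM => /negP nsat /(satE (CN M NM) ff).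
    exact: nsat.
- have := smodel_cat_In i; case: ifP => _ Mi.
  + by apply/(satE (CP _ Mi) ff); apply: satP.
  + by apply/negP => /(satE (CN _ Mi) ff); apply: unsatN.
Qed.

(* The tuple the procedure builds along the construction of f, computed with
   the functions sem^o_M; it agrees with sem_M only pointwise (eval_tupleE). *)
Fixpoint eval_tuple (s : seq Model) (f : form L) : semtuple Theta s :=
  match f with
  | FOp0 o => fun i => sem (Theta (smodel i)) (FOp0 o)
  | FOp1 o g => fun i => sem1 (Theta (smodel i)) o (eval_tuple g i)
  | FOp2 o g h => fun i =>
      sem2 (Theta (smodel i)) o (eval_tuple g i) (eval_tuple h i)
  end.

Lemma InR_eval_tuple s f : wf f -> InR (eval_tuple (s := s) f) (fty f).
Proof.
elim: f => [o | o g IHg | o g IHg h IHh] /=.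
- by move=> _; apply: InR0.
- by case/andP=> /IHg Rg tg; apply: InR1 Rg tg.
- by case/and4P=> /IHg Rg tg /IHh Rh th; apply: InR2 Rg tg Rh th.
Qed.

Variable s : seq Model.
Hypothesis sC : forall i : 'I_(size s), C (smodel i).

Lemma eval_tupleE f (i : 'I_(size s)) :
  wf f -> eval_tuple f i = sem (Theta (smodel i)) f.
Proof.
elim: f => [o | o g IHg | o g IHg h IHh] //=.
- by case/andP=> wg tg; rewrite sem_FOp1 // IHg.
- by case/and4P=> wg tg wh th; rewrite sem_FOp2 // IHg // IHh.
Qed.

Lemma InR_sem (X : semtuple Theta s) t : InR X t ->
  exists2 f, is_fm f t & forall i, X i = sem (Theta (smodel i)) f.
Proof.
elim=> [o | o {}X {}t _ [g [wg <-] Xg] tg | o X1 X2 t1 t2 _ [g [wg <-] X1g] tg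
                                                    _ [h [wh <-] X2h] th].
- by exists (FOp0 o).
- exists (FOp1 o g) => [|i]; first by rewrite /is_fm /= wg tg.
  by rewrite sem_FOp1 // Xg.
- exists (FOp2 o g h) => [|i]; first by rewrite /is_fm /= wg tg wh th.
  by rewrite sem_FOp2 // X1g X2h.
Qed.

End SemanticEnumeration.

Theorem theorem2 (L : logic) (Model : Type) (sat : Model -> form L -> Prop)
  (C : Model -> Prop) (Theta : Model -> LMpair L)
  (HTheta : LCpair sat C Theta) (P N : seq Model) (HS : sample C P N) :
  accepts Theta P N <-> separable sat P N.
Proof.
have sC := sample_smodel HS.
split=> [[X [t [RX [ft accX]]]] | [f [[wff ff] sepf]]].
- have [f [wff tf] Xf] := InR_sem HTheta sC RX.
  have ff : is_final f by rewrite /is_final tf.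
  exists f; split; first exact: ff.
  apply/(accepting_profile_separates HTheta HS ff) => i.
  by rewrite -Xf; apply: accX.
- exists (eval_tuple Theta (s := P ++ N) f), (fty f).
  split; first exact: InR_eval_tuple.
  split=> // i; rewrite (eval_tupleE HTheta sC _ wff).
  by move: i; apply/(accepting_profile_separates HTheta HS).
Qed.
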